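(* Let $G=\mathbf{PGO}_8$ be the split adjoint group of type ${\rm D}_4$. Then $\operatorname{Sdec}(G)=\operatorname{Dec}(G)$, i.e. every semi-decomposable degree $3$ invariant of $G$ is decomposable.
   Context: For a split semisimple group $G=G^{sc}/\boldsymbol{\mu}$ let $T^*_{sc}$ be the weight lattice, $T^*\subseteq T^*_{sc}$ the characters trivial on $\boldsymbol{\mu}$, $W$ the Weyl group. Let $c_2\colon\mathbb{Z}[T^*_{sc}]\to S^2(T^*_{sc})$ be the additive map obtained by composing the ring homomorphism $\mathbb{Z}[T^*_{sc}]\to S^*(T^*_{sc})/S^{\ge3}(T^*_{sc})$, $e^{-\omega}\mapsto1-\omega$ (so $e^{\omega}\mapsto1+\omega+\omega^2$) for fundamental weights $\omega$, with projection to degree 2. $\operatorname{Dec}(G)=c_2(\mathbb{Z}[T^*]^W)$ (decomposable invariants); $I^W_{sc}$ is the ideal of $\mathbb{Z}[T^*_{sc}]$ generated by the $W$-invariant elements of the augmentation ideal (kernel of $e^\lambda\mapsto1$); $\operatorname{Sdec}(G)=c_2(\mathbb{Z}[T^*]\cap I^W_{sc})$ (semi-decomposable invariants). *)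

From HB Require Import structures.
From mathcomp Require Import all_boot all_order all_algebra.
From mathcomp Require Import finmap.
From mathcomp Require Export monalg.

Set Implicit Arguments.
Unset Strict Implicit.
Unset Printing Implicit Defensive.

Import Order.TTheory GRing.Theory Num.Theory.
Local Open Scope ring_scope.

(* The weight lattice T^*_sc is Z^4, written in the basis of the       *)
(* fundamental weights w_0,..,w_3 (node 1 is the central node of the   *)
(* Dynkin diagram D4).                                                 *)
Definition weight := 'rV[int]_4.

(* Cartan matrix of D4: row i = the simple root alpha_i expressed in   *)
(* the basis of fundamental weights; entry (i,j) = <alpha_i, alpha_j^v> *)
Definition cartanD4 : 'M[int]_4 :=
  \matrix_(i < 4, j < 4)
    (if i == j then 2 else if (i == 1 :> nat) || (j == 1 :> nat) then -1 else 0).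

Definition simple_root (i : 'I_4) : weight := row i cartanD4.

(* simple reflection s_i(l) = l - <l, alpha_i^v> alpha_i,              *)
(* and <l, alpha_i^v> = l_i in fundamental-weight coordinates.          *)
Definition sref (i : 'I_4) (l : weight) : weight := l - (l ord0 i) *: simple_root i.

Inductive inWeyl : (weight -> weight) -> Prop :=
  | inWeyl_id : inWeyl id
  | inWeyl_comp (i : 'I_4) (w : weight -> weight) :
      inWeyl w -> inWeyl (sref i \o w).

(* T^* for the adjoint group PGO_8 (mu = full centre): the root lattice *)
Definition in_rootlat (l : weight) : Prop :=
  exists c : 'rV[int]_4, l = c *m cartanD4.

(* The group ring Z[T^*_sc]: finitely supported Z-valued functions on  *)
(* the weight lattice; << a *g l >> is a e^l.                          *)
Definition GR := {malg int[weight]}.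

Definition gr_mul (f g : GR) : GR :=
  \sum_(a <- msupp f) \sum_(b <- msupp g) << f@_a * g@_b *g (a + b) >>.

Definition aug (f : GR) : int := \sum_(a <- msupp f) f@_a.

Definition gr_act (w : weight -> weight) (f : GR) : GR :=
  \sum_(a <- msupp f) << f@_a *g w a >>.

Definition W_invariant (f : GR) : Prop :=
  forall w, inWeyl w -> gr_act w f = f.

Definition in_ZT (f : GR) : Prop := forall a, a \in msupp f -> in_rootlat a.

Definition in_IWsc (x : GR) : Prop :=
  exists s : seq (GR * GR),
    (forall p, p \in s -> W_invariant p.2 /\ aug p.2 = 0) /\
    x = \sum_(p <- s) gr_mul p.1 p.2.

(* The symmetric algebra S^*(T^*_sc) = Z[w_0,..,w_3]                   *)
Definition Sym := {malg int[{cmonom 'I_4}]}.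

Definition wvar (i : 'I_4) : Sym := << ucm i >>.

(* image of e^l under the ring hom e^{-w} |-> 1 - w, i.e.              *)
(* e^{w} |-> 1 + w + w^2 (modulo S^{>=3}); taken here without          *)
(* truncation, which does not affect the degree <= 2 part.             *)
Definition chern_img (l : weight) : Sym :=
  \prod_(i < 4)
    (if 0 <= l ord0 i then (1 + wvar i + wvar i ^+ 2) ^+ `|l ord0 i|%N
     else (1 - wvar i) ^+ `|l ord0 i|%N).

Definition deg2 (p : Sym) : Sym :=
  \sum_(m <- msupp p | mdeg m == 2%N) << p@_m *g m >>.

Definition c2 (f : GR) : Sym :=
  deg2 (\sum_(a <- msupp f) f@_a *: chern_img a).

Definition Dec (q : Sym) : Prop :=
  exists f : GR, in_ZT f /\ W_invariant f /\ c2 f = q.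

Definition Sdec (q : Sym) : Prop :=
  exists f : GR, in_ZT f /\ in_IWsc f /\ c2 f = q.

(* Twice the degree-two part of the Chern map is the moment form: for f = sum_a f_a e^a,
   2 c2(f) = sum_(i,j) m_ij(f) w_i w_j + sum_i m_i(f) w_i^2 with m_i(f) = sum_a f_a a_i and
   m_ij(f) = sum_a f_a a_i a_j.  A function P on the weight lattice pairs to zero with the ideal
   I^W_sc as soon as it has the mean-value property sum_(w in S) P(a + w b) = |S| P(a) for some
   finite nonempty S in W.  For an explicit S of size 8, the coordinate functions, the quadratics
   4 x_i x_j - C_ij (x, x) and a cubic Q - 3 (x, x) all have this property, so on I^W_sc every
   moment is determined by (x, x)(f) = Q(f) / 3.  On the root lattice Q is 48 times an
   integer-valued polynomial, hence (x, x)(f) = 16 M for f in Z[T^*] and I^W_sc, and then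
   c2(f) = c2(M g0) for an explicit invariant g0 in Z[T^*] with (x, x)(g0) = 16.  Conversely an
   invariant f in Z[T^*] and f - aug(f) e^0, which lies in I^W_sc, have the same c2. *)

From HB Require Import structures.
From mathcomp Require Import all_boot all_order all_algebra.
From mathcomp Require Import finmap monalg.
From mathcomp Require Import ring.

Set Implicit Arguments.
Unset Strict Implicit.
Unset Printing Implicit Defensive.

Import Order.TTheory GRing.Theory Num.Theory.
Local Open Scope ring_scope.

(** * Coordinates and the Weyl group *)

Definition o0 : 'I_4 := @Ordinal 4 0 isT.
Definition o1 : 'I_4 := @Ordinal 4 1 isT.
Definition o2 : 'I_4 := @Ordinal 4 2 isT.
Definition o3 : 'I_4 := @Ordinal 4 3 isT.

Lemma ord4P (P : 'I_4 -> Prop) : P o0 -> P o1 -> P o2 -> P o3 -> forall i, P i.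
Proof.
move=> P0 P1 P2 P3 [[|[|[|[|k]]]] lt_k4] //.
- by rewrite (_ : Ordinal _ = o0) //; apply: val_inj.
- by rewrite (_ : Ordinal _ = o1) //; apply: val_inj.
- by rewrite (_ : Ordinal _ = o2) //; apply: val_inj.
- by rewrite (_ : Ordinal _ = o3) //; apply: val_inj.
Qed.

Definition int4 := (int * int * int * int)%type.

Definition sel4 (t : int4) (i : 'I_4) : int :=
  let: (x0, x1, x2, x3) := t in
  match nat_of_ord i with 0 => x0 | 1 => x1 | 2 => x2 | _ => x3 end.

Definition add4 (s t : int4) : int4 :=
  let: (x0, x1, x2, x3) := s in let: (y0, y1, y2, y3) := t in
  (x0 + y0, x1 + y1, x2 + y2, x3 + y3).

Definition coords (l : weight) : int4 := (l ord0 o0, l ord0 o1, l ord0 o2, l ord0 o3).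

Definition of_coords (t : int4) : weight := \row_i sel4 t i.

Lemma sel4_coords l i : sel4 (coords l) i = l ord0 i.
Proof. by move: i; apply: ord4P. Qed.

Lemma coords_of_coords t : coords (of_coords t) = t.
Proof. by case: t => [[[x0 x1] x2] x3]; rewrite /coords !mxE. Qed.

Lemma of_coordsK : cancel coords of_coords.
Proof.
move=> l; apply/rowP => i; rewrite mxE sel4_coords.
by congr (l _ _); apply: val_inj; case: (_ : 'I_1) => [[]].
Qed.

Lemma coords_inj : injective coords.
Proof. exact: can_inj of_coordsK. Qed.

Lemma coordsD a b : coords (a + b) = add4 (coords a) (coords b).
Proof. by rewrite /coords !mxE. Qed.

Definition sref4 (i : 'I_4) (t : int4) : int4 :=
  let: (x0, x1, x2, x3) := t in
  match nat_of_ord i with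
  | 0 => (- x0, x1 + x0, x2, x3)
  | 1 => (x0 + x1, - x1, x2 + x1, x3 + x1)
  | 2 => (x0, x1 + x2, - x2, x3)
  | _ => (x0, x1 + x3, x2, - x3)
  end.

Lemma coords_sref i l : coords (sref i l) = sref4 i (coords l).
Proof.
move: i; apply: ord4P; rewrite /sref /simple_root /coords /cartanD4 !mxE /=;
  congr (_, _, _, _); ring.
Qed.

Definition cartan4 (c : int4) : int4 :=
  let: (c0, c1, c2, c3) := c in
  (2 * c0 - c1, - c0 + 2 * c1 - c2 - c3, - c1 + 2 * c2, - c1 + 2 * c3).

Lemma sum_ord4 (V : nmodType) (F : 'I_4 -> V) :
  \sum_(i < 4) F i = F o0 + F o1 + F o2 + F o3.
Proof.
rewrite !big_ord_recl big_ord0 addr0 !addrA.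
by congr (F _ + F _ + F _ + F _); apply: val_inj.
Qed.

Lemma coords_mulmx_cartan c : coords (c *m cartanD4) = cartan4 (coords c).
Proof.
by rewrite /coords /cartan4 !mxE !sum_ord4 /cartanD4 !mxE /=; congr (_, _, _, _); ring.
Qed.

Definition weyl_word (w : seq 'I_4) : weight -> weight :=
  foldr (fun i u => sref i \o u) id w.

Lemma weyl_wordP w : inWeyl (weyl_word w).
Proof. by elim: w => [|i w IH]; [exact: inWeyl_id | exact: inWeyl_comp]. Qed.

Lemma inWeyl_fix0 w : inWeyl w -> w 0 = 0.
Proof. by elim=> [//|i u _ IH] /=; rewrite IH /sref mxE scale0r subr0. Qed.

(* The rows of a [mat4] are the images of the four basis vectors. *)
Definition mat4 := (int4 * int4 * int4 * int4)%type.

Definition mat4_apply (M : mat4) (t : int4) : int4 :=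
  let: ((a0, a1, a2, a3), (b0, b1, b2, b3), (c0, c1, c2, c3), (d0, d1, d2, d3)) := M in
  let: (x0, x1, x2, x3) := t in
  (x0 * a0 + x1 * b0 + x2 * c0 + x3 * d0, x0 * a1 + x1 * b1 + x2 * c1 + x3 * d1,
   x0 * a2 + x1 * b2 + x2 * c2 + x3 * d2, x0 * a3 + x1 * b3 + x2 * c3 + x3 * d3).

Definition mat4_map (f : int4 -> int4) (M : mat4) : mat4 :=
  let: (r0, r1, r2, r3) := M in (f r0, f r1, f r2, f r3).

Definition word_mat (w : seq 'I_4) : mat4 :=
  foldr (fun i => mat4_map (sref4 i))
    ((1, 0, 0, 0), (0, 1, 0, 0), (0, 0, 1, 0), (0, 0, 0, 1)) w.

Lemma sref4_mat4_apply i M t :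
  sref4 i (mat4_apply M t) = mat4_apply (mat4_map (sref4 i) M) t.
Proof.
case: M => [[[[[[a0 a1] a2] a3] [[[b0 b1] b2] b3]] [[[c0 c1] c2] c3]] [[[d0 d1] d2] d3]].
case: t => [[[x0 x1] x2] x3].
by move: i; apply: ord4P; rewrite /= ; congr (_, _, _, _); ring.
Qed.

Lemma coords_weyl_word w b :
  coords (weyl_word w b) = mat4_apply (word_mat w) (coords b).
Proof.
elim: w => [|i w IH]; last by rewrite /= coords_sref IH sref4_mat4_apply.
change (coords b = mat4_apply (word_mat [::]) (coords b)).
by case: (coords b) => [[[x0 x1] x2] x3] /=; congr (_, _, _, _); ring.
Qed.

Definition mean_value (P : weight -> int) (ws : seq (seq 'I_4)) :=
  forall a b, \sum_(w <- ws) P (a + weyl_word w b) = (size ws)%:R * P a.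

Lemma mean_value_coords (P : int4 -> int) ws :
  (forall a b, \sum_(M <- map word_mat ws) P (add4 a (mat4_apply M b))
               = (size ws)%:R * P a) ->
  mean_value (P \o coords) ws.
Proof.
move=> PH a b.
transitivity (\sum_(M <- map word_mat ws) P (add4 (coords a) (mat4_apply M (coords b)))).
  by rewrite big_map; apply: eq_bigr => w _; apply: (congr1 P); rewrite coordsD coords_weyl_word.
by rewrite PH.
Qed.

(** * Pairing the group ring with functions on the weights *)

Definition gr_pair (P : weight -> int) (f : GR) : int := mmap (@idfun int) P f.

HB.instance Definition _ P := GRing.Additive.copy (gr_pair P) (mmap (@idfun int) P).

Lemma gr_pairE P f : gr_pair P f = \sum_(a <- msupp f) f@_a * P a.
Proof. by []. Qed.

Lemma gr_pairB P f g : gr_pair P (f - g) = gr_pair P f - gr_pair P g.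
Proof. exact: raddfB. Qed.

Lemma gr_pair_sum (I : Type) (r : seq I) P (F : I -> GR) :
  gr_pair P (\sum_(i <- r) F i) = \sum_(i <- r) gr_pair P (F i).
Proof. exact: raddf_sum. Qed.

Lemma gr_pairU P c a : gr_pair P << c *g a >> = c * P a.
Proof. exact: mmapU. Qed.

Lemma gr_pairZ P c f : gr_pair P (c *: f) = c * gr_pair P f.
Proof.
rewrite /gr_pair (mmapEw (msuppZ_le c f)) mmapE mulr_sumr.
by apply: eq_bigr => a _ /=; rewrite mcoeffZ mulrA.
Qed.

Lemma eq_gr_pair P Q f : P =1 Q -> gr_pair P f = gr_pair Q f.
Proof. by move=> PQ; apply: eq_bigr => a _; rewrite PQ. Qed.

Lemma gr_pair_comb (u v : int) P Q f :
  gr_pair (fun a => u * P a + v * Q a) f = u * gr_pair P f + v * gr_pair Q f.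
Proof. by rewrite !gr_pairE !mulr_sumr -big_split; apply: eq_bigr => a _ /=; ring. Qed.

Lemma gr_pair_sum_fun (I : Type) (r : seq I) (Q : I -> weight -> int) f :
  \sum_(i <- r) gr_pair (Q i) f = gr_pair (fun a => \sum_(i <- r) Q i a) f.
Proof.
rewrite gr_pairE exchange_big /=; apply: eq_bigr => a _.
by rewrite mulr_sumr.
Qed.

Lemma gr_pair_cst c f : gr_pair (fun=> c) f = c * aug f.
Proof. by rewrite gr_pairE /aug mulr_sumr; apply: eq_bigr => a _; rewrite mulrC. Qed.

Lemma gr_actEw w f (d : {fset weight}) : (msupp f `<=` d)%fset ->
  gr_act w f = \sum_(a <- d) << f@_a *g w a >>.
Proof.
move=> le_fd; rewrite /gr_act (big_fset_incl _ le_fd) //= => a _ /mcoeff_outdom ->.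
by rewrite monalgU0.
Qed.

Lemma gr_act_is_zmod_morphism w : zmod_morphism (gr_act w).
Proof.
move=> f g; rewrite (gr_actEw w (msuppB_le f g)).
rewrite (gr_actEw w (fsubsetUl (msupp f) (msupp g))).
rewrite (gr_actEw w (fsubsetUr (msupp f) (msupp g))) -sumrB.
by apply: eq_bigr => a _; rewrite mcoeffB monalgUB.
Qed.

HB.instance Definition _ w :=
  GRing.isZmodMorphism.Build GR GR (gr_act w) (gr_act_is_zmod_morphism w).

Lemma gr_act_sum w (I : Type) (r : seq I) (F : I -> GR) :
  gr_act w (\sum_(i <- r) F i) = \sum_(i <- r) gr_act w (F i).
Proof. exact: raddf_sum. Qed.

Lemma gr_actU w c a : gr_act w << c *g a >> = << c *g w a >>.
Proof. by rewrite (gr_actEw w msuppU_le) big_seq_fset1 mcoeffUU. Qed.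

Lemma gr_actZ w c f : gr_act w (c *: f) = c *: gr_act w f.
Proof. by rewrite -[c]intz !scaler_int raddfMz. Qed.

Lemma gr_act_id f : gr_act id f = f.
Proof. by rewrite [RHS]monalgE. Qed.

Lemma gr_act_comp u w f : gr_act (u \o w) f = gr_act u (gr_act w f).
Proof. by rewrite [gr_act w f]/gr_act gr_act_sum; apply: eq_bigr => a _; rewrite gr_actU. Qed.

Lemma gr_pair_act P w f : gr_pair P (gr_act w f) = gr_pair (P \o w) f.
Proof. by rewrite /gr_act gr_pair_sum; apply: eq_bigr => a _; rewrite gr_pairU. Qed.

Lemma gr_pair_mul P g h :
  gr_pair P (gr_mul g h) = \sum_(a <- msupp g) g@_a * gr_pair (fun b => P (a + b)) h.
Proof.
rewrite /gr_mul gr_pair_sum; apply: eq_bigr => a _.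
by rewrite gr_pair_sum gr_pairE mulr_sumr; apply: eq_bigr => b _; rewrite gr_pairU mulrA.
Qed.

Lemma gr_mul1l g : gr_mul << (0 : weight) >> g = g.
Proof.
rewrite /gr_mul msuppU oner_eq0 big_seq_fset1 mcoeffUU [RHS]monalgE.
by apply: eq_bigr => b _; rewrite mul1r add0r.
Qed.

Lemma W_invariantP f : (forall i, gr_act (sref i) f = f) -> W_invariant f.
Proof. by move=> fi w; elim=> [|i u _ IH]; [exact: gr_act_id | rewrite gr_act_comp IH]. Qed.

Lemma W_invariantB f g : W_invariant f -> W_invariant g -> W_invariant (f - g).
Proof. by move=> fW gW w wW; rewrite raddfB /= fW ?gW. Qed.

Lemma W_invariantZ c f : W_invariant f -> W_invariant (c *: f).
Proof. by move=> fW w wW; rewrite gr_actZ fW. Qed.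

(* Averaging over [ws] turns [gr_pair (P (a + .)) h] into a multiple of [aug h]. *)
Lemma gr_pair_shift_eq0 P ws h a : mean_value P ws -> ws != [::] ->
  W_invariant h -> aug h = 0 -> gr_pair (fun b => P (a + b)) h = 0.
Proof.
move=> PH ws_neq0 hW h0.
have hw w : gr_pair (fun b => P (a + b)) h = gr_pair (fun b => P (a + weyl_word w b)) h.
  by rewrite -[in LHS](hW _ (weyl_wordP w)) gr_pair_act.
have : (size ws)%:R * gr_pair (fun b => P (a + b)) h = 0.
  rewrite -sum1_size natr_sum mulr_suml (eq_bigr _ (fun w _ => etrans (mul1r _) (hw w))).
  by rewrite gr_pair_sum_fun (eq_gr_pair _ (PH a)) gr_pair_cst h0 mulr0.
by move/eqP; rewrite mulf_eq0 pnatr_eq0 size_eq0 (negPf ws_neq0) => /eqP.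
Qed.

Lemma gr_pair_IWsc P ws x : mean_value P ws -> ws != [::] -> in_IWsc x -> gr_pair P x = 0.
Proof.
move=> PH ws_neq0 [s [sH ->]]; rewrite gr_pair_sum big1_seq // => p /andP[_ /sH [pW p0]].
by rewrite gr_pair_mul big1 // => a _; rewrite (gr_pair_shift_eq0 _ PH) ?mulr0.
Qed.

(** * The degree-two part of the Chern map *)

Definition homog (d : nat) (p : Sym) := forall m, m \in msupp p -> mdeg m = d.

Definition order_ge3 (p : Sym) := forall m : {cmonom 'I_4}, (mdeg m <= 2)%N -> p@_m = 0.

Lemma homog0 d : homog d 0.
Proof. by move=> m; rewrite msupp0 in_fset0. Qed.

Lemma homog1 : homog 0 1.
Proof. by move=> m; rewrite -mpolyC1E msuppC oner_eq0 in_fset1 => /eqP ->; rewrite mdeg1. Qed.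

Lemma homog_wvar i : homog 1 (wvar i).
Proof. by move=> m; rewrite msuppU oner_eq0 in_fset1 => /eqP ->; rewrite mdegU. Qed.

Lemma homogD d p q : homog d p -> homog d q -> homog d (p + q).
Proof.
by move=> hp hq m /(fsubsetP (msuppD_le _ _)); rewrite in_fsetU => /orP[/hp | /hq].
Qed.

Lemma homogM d e p q : homog d p -> homog e q -> homog (d + e) (p * q).
Proof. by move=> hp hq m /msuppM_le [m1 [m2 [/hp <- /hq <- ->]]]; rewrite mdegM. Qed.

Lemma homogX d p n : homog d p -> homog (d * n) (p ^+ n).
Proof.
move=> hp; elim: n => [|n IH]; first by rewrite muln0 expr0; exact: homog1.
by rewrite exprS mulnS; apply: homogM.
Qed.

Lemma homog_intr d (c : int) p : homog d p -> homog d (c%:~R * p).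
Proof. by move=> hp m; rewrite mulrzl -scaler_int => /(fsubsetP (msuppZ_le _ _)) /hp. Qed.

Lemma order_ge3_0 : order_ge3 0.
Proof. by move=> m _; rewrite mcoeff0. Qed.

Lemma order_ge3D p q : order_ge3 p -> order_ge3 q -> order_ge3 (p + q).
Proof. by move=> hp hq m m_le2; rewrite mcoeffD hp ?hq ?addr0. Qed.

Lemma order_ge3Ml q p : order_ge3 p -> order_ge3 (q * p).
Proof.
move=> hp m m_le2; rewrite mcoeffMl big1 // => m1 _; rewrite big1 // => m2 _.
case: eqP => [m12|]; last by rewrite mulr0n.
by rewrite hp ?mulr0 ?mul0rn //; apply: leq_trans m_le2; rewrite -m12 mdegM leq_addl.
Qed.

Lemma order_ge3Mr q p : order_ge3 p -> order_ge3 (p * q).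
Proof. by rewrite mulrC; apply: order_ge3Ml. Qed.

Lemma order_ge3_homog d p : homog d p -> (2 < d)%N -> order_ge3 p.
Proof.
move=> hp d_gt2 m m_le2; apply: mcoeff_outdom; apply: contraTN m_le2 => /hp ->.
by rewrite -ltnNge.
Qed.

Lemma deg2Ew p (d : {fset {cmonom 'I_4}}) : (msupp p `<=` d)%fset ->
  deg2 p = \sum_(m <- d | mdeg m == 2%N) << p@_m *g m >>.
Proof.
move=> le_pd; rewrite /deg2 big_mkcond [RHS]big_mkcond (big_fset_incl _ le_pd) //=.
by move=> m _ /mcoeff_outdom ->; rewrite monalgU0; case: ifP.
Qed.

Lemma deg2_is_zmod_morphism : zmod_morphism deg2.
Proof.
move=> p q; rewrite (deg2Ew (msuppB_le p q)).
rewrite (deg2Ew (fsubsetUl (msupp p) (msupp q))).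
rewrite (deg2Ew (fsubsetUr (msupp p) (msupp q))) -sumrB.
by apply: eq_bigr => m _; rewrite mcoeffB monalgUB.
Qed.

HB.instance Definition _ := GRing.isZmodMorphism.Build Sym Sym deg2 deg2_is_zmod_morphism.

Lemma deg2_homog d p : homog d p -> deg2 p = if d == 2%N then p else 0.
Proof.
move=> hp; case: eqP => [d2|d_ne2]; last first.
  by rewrite /deg2 big1_seq // => m /andP[/eqP m2 /hp md]; case: d_ne2; rewrite -md.
rewrite /deg2 big_seq_cond [RHS]monalgE [RHS]big_seq_cond; apply: eq_bigl => m.
by case: (boolP (m \in msupp p)) => //= /hp ->; rewrite d2.
Qed.

Lemma deg2_order_ge3 p : order_ge3 p -> deg2 p = 0.
Proof. by move=> hp; rewrite /deg2 big1 // => m /eqP m2; rewrite hp ?monalgU0 ?m2. Qed.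

Lemma deg2_intr (c : int) p : deg2 (c *: p) = c%:~R * deg2 p.
Proof. by rewrite -[c in LHS]intz scaler_int raddfMz mulrzl. Qed.

Definition jet (p L Q : Sym) := [/\ homog 1 L, homog 2 Q & order_ge3 (p - (1 + L + Q))].

Lemma deg2_jet p L Q : jet p L Q -> deg2 p = Q.
Proof.
case=> hL hQ hp; rewrite -(subrK (1 + L + Q) p) raddfD /= deg2_order_ge3 // add0r.
by rewrite !raddfD /= (deg2_homog homog1) (deg2_homog hL) (deg2_homog hQ) /= !add0r.
Qed.

Lemma jetM p L Q p' L' Q' :
  jet p L Q -> jet p' L' Q' -> jet (p * p') (L + L') (Q + Q' + L * L').
Proof.
case=> hL hQ hp [hL' hQ' hp']; split; first exact: homogD.
  by apply: homogD; [exact: homogD | exact: homogM hL hL'].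
have -> : p * p' - (1 + (L + L') + (Q + Q' + L * L')) =
    (p - (1 + L + Q)) * p' + (1 + L + Q) * (p' - (1 + L' + Q'))
    + (L * Q' + Q * L' + Q * Q') by ring.
apply: order_ge3D; first by apply: order_ge3D; [exact: order_ge3Mr | exact: order_ge3Ml].
apply: order_ge3D; last exact: order_ge3_homog (homogM hQ hQ') isT.
apply: order_ge3D; first exact: order_ge3_homog (homogM hL hQ') isT.
exact: order_ge3_homog (homogM hQ hL') isT.
Qed.

(* Since [2 Q - L^2] is additive under [jetM], it can be tracked through a product. *)
Lemma jet_prod (I : Type) (r : seq I) (F L D : I -> Sym) :
  (forall i, exists2 Q, jet (F i) (L i) Q & Q *+ 2 = L i ^+ 2 + D i) ->
  exists2 Q, jet (\prod_(i <- r) F i) (\sum_(i <- r) L i) Q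
           & Q *+ 2 = (\sum_(i <- r) L i) ^+ 2 + \sum_(i <- r) D i.
Proof.
move=> FL; elim: r => [|i r [Q jetQ Q2]].
  exists 0; last by rewrite !big_nil; ring.
  rewrite !big_nil; split; [exact: homog0 | exact: homog0 |].
  by rewrite !addr0 subrr; exact: order_ge3_0.
have [Qi jetQi Qi2] := FL i.
exists (Qi + Q + L i * \sum_(j <- r) L j); first by rewrite !big_cons; exact: jetM.
by rewrite !big_cons !mulrnDl Qi2 Q2; ring.
Qed.

Lemma trinomial_expn (R : comNzRingType) (v : R) (n : nat) :
  exists c r, c *+ 2 = n%:Z * n%:Z + n%:Z /\
    (1 + v + v ^+ 2) ^+ n = 1 + n%:R * v + c%:~R * v ^+ 2 + v ^+ 3 * r.
Proof.
elim: n => [|n [c [r [c2 E]]]]; first by exists 0, 0; split; rewrite ?expr0; ring.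
exists (c + n%:Z + 1), (n%:R + c%:~R + c%:~R * v + r * (1 + v + v ^+ 2)); split.
  by rewrite !mulrnDl c2; ring.
by rewrite exprSr E; ring.
Qed.

Lemma one_sub_expn (R : comNzRingType) (v : R) (n : nat) :
  exists c r, c *+ 2 = n%:Z * n%:Z - n%:Z /\
    (1 - v) ^+ n = 1 - n%:R * v + c%:~R * v ^+ 2 + v ^+ 3 * r.
Proof.
elim: n => [|n [c [r [c2 E]]]]; first by exists 0, 0; split; rewrite ?expr0; ring.
exists (c + n%:Z), (r * (1 - v) - c%:~R); split.
  by rewrite !mulrnDl c2; ring.
by rewrite exprSr E; ring.
Qed.

Lemma chern_factor_expansion (R : comNzRingType) (v : R) (x : int) :
  exists c r, c *+ 2 = x * x + x /\
    (if 0 <= x then (1 + v + v ^+ 2) ^+ `|x|%N else (1 - v) ^+ `|x|%N)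
      = 1 + x%:~R * v + c%:~R * v ^+ 2 + v ^+ 3 * r.
Proof.
case: x => n /=; first by have [c [r [c2 E]]] := trinomial_expn v n; exists c, r.
have [c [r [c2 E]]] := one_sub_expn v n.+1; exists c, r.
by rewrite c2 E NegzE mulrNz; split; ring.
Qed.

Lemma jet_chern_factor (x : int) (v : Sym) : homog 1 v ->
  exists2 Q, jet (if 0 <= x then (1 + v + v ^+ 2) ^+ `|x|%N else (1 - v) ^+ `|x|%N)
                 (x%:~R * v) Q
           & Q *+ 2 = (x%:~R * v) ^+ 2 + x%:~R * v ^+ 2.
Proof.
move=> hv; have [c [r [c2 ->]]] := chern_factor_expansion v x.
exists (c%:~R * v ^+ 2).
  split; [exact: homog_intr | exact/homog_intr/(homogX (n := 2) hv) |].
  rewrite (_ : _ - _ = v ^+ 3 * r); last by ring.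
  by apply: order_ge3Mr; apply: order_ge3_homog (homogX (n := 3) hv) _.
have -> : (c%:~R * v ^+ 2) *+ 2 = (c *+ 2)%:~R * v ^+ 2 by ring.
by rewrite c2; ring.
Qed.

Lemma deg2_chern_twice l :
  deg2 (chern_img l) *+ 2 =
    (\sum_(i < 4) (l ord0 i)%:~R * wvar i) ^+ 2 + \sum_(i < 4) (l ord0 i)%:~R * wvar i ^+ 2.
Proof.
have [Q jetQ Q2] :=
  jet_prod (index_enum 'I_4) (fun i => jet_chern_factor (l ord0 i) (@homog_wvar i)).
by rewrite /chern_img (deg2_jet jetQ) Q2.
Qed.

Definition moment1 (f : GR) (i : 'I_4) : int := gr_pair (fun a => a ord0 i) f.

Definition moment2 (f : GR) (i j : 'I_4) : int := gr_pair (fun a => a ord0 i * a ord0 j) f.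

Lemma gr_pair_sum_intr (I : Type) (r : seq I) (P : I -> weight -> int) (X : I -> Sym) f :
  \sum_(a <- msupp f) (f@_a)%:~R * \sum_(i <- r) (P i a)%:~R * X i
  = \sum_(i <- r) (gr_pair (P i) f)%:~R * X i.
Proof.
rewrite (eq_bigr _ (fun a _ => mulr_sumr _ _ _ _)) exchange_big; apply: eq_bigr => i _ /=.
by rewrite gr_pairE rmorph_sum mulr_suml; apply: eq_bigr => a _; rewrite rmorphM /= mulrA.
Qed.

Lemma c2_twice f :
  c2 f *+ 2 = \sum_(i < 4) \sum_(j < 4) (moment2 f i j)%:~R * (wvar i * wvar j)
              + \sum_(i < 4) (moment1 f i)%:~R * wvar i ^+ 2.
Proof.
have sq (a : weight) : (\sum_(i < 4) (a ord0 i)%:~R * wvar i) ^+ 2 =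
    \sum_(i < 4) \sum_(j < 4) (a ord0 i * a ord0 j)%:~R * (wvar i * wvar j).
  rewrite expr2 mulr_suml; apply: eq_bigr => i _; rewrite mulr_sumr; apply: eq_bigr => j _.
  (* [ring] gets lost unfolding [wvar i] and [a ord0 i]: abstract them first. *)
  by move: (a ord0 i) (a ord0 j) (wvar i) (wvar j) => x y v w; ring.
rewrite /c2 raddf_sum -sumrMnl.
under eq_bigr => a _ do rewrite /= deg2_intr -mulrnAr deg2_chern_twice sq.
rewrite (eq_bigr _ (fun a _ => mulrDr _ _ _)) big_split /=.
congr (_ + _); last exact: gr_pair_sum_intr.
rewrite (eq_bigr _ (fun a _ => mulr_sumr _ _ _ _)) exchange_big.
by apply: eq_bigr => i _; exact: gr_pair_sum_intr.
Qed.

Lemma malg_mulrnI (K : choiceType) n :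
  (0 < n)%N -> injective (fun p : {malg int[K]} => p *+ n).
Proof.
move=> n_gt0 p q /= pq; apply/malgP => m; apply/eqP.
by have := eqrMn2r n p@_m q@_m; rewrite -!mcoeffMn pq eqxx eqn0Ngt n_gt0 /= => <-.
Qed.

Lemma c2_eq_of_moments f g :
  (forall i, moment1 f i = moment1 g i) -> (forall i j, moment2 f i j = moment2 g i j) ->
  c2 f = c2 g.
Proof.
move=> m1 m2; apply: (malg_mulrnI (isT : 0 < 2)%N); rewrite [LHS]c2_twice [RHS]c2_twice.
apply: congr2; apply: eq_bigr => i _; last by rewrite m1.
by apply: eq_bigr => j _; rewrite m2.
Qed.

(** * Mean-value polynomials for D4 *)

(* [(x, x)] for the W-invariant form whose Gram matrix in the fundamental weights is the
   inverse Cartan matrix; roots have square length 2. *)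
Definition inv_form (t : int4) : int :=
  let: (x0, x1, x2, x3) := t in
  x0 * x0 + 2 * x1 * x1 + x2 * x2 + x3 * x3
  + 2 * x0 * x1 + x0 * x2 + x0 * x3 + 2 * x1 * x2 + 2 * x1 * x3 + x2 * x3.

Definition quad_harm (i j : 'I_4) (t : int4) : int :=
  4 * (sel4 t i * sel4 t j) - cartanD4 i j * inv_form t.

Definition cubic (t : int4) : int :=
  let: (x0, x1, x2, x3) := t in
  x0 * x0 * x0 - 8 * x1 * x1 * x1 - 27 * x2 * x2 * x2 + 31 * x3 * x3 * x3
  - 12 * x0 * x1 * x1 + 9 * x0 * x2 * x2 + 54 * x0 * x0 * x2 - 57 * x0 * x0 * x3
  - 72 * x1 * x1 * x2 + 84 * x1 * x1 * x3 - 84 * x1 * x2 * x2 + 108 * x1 * x3 * x3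
  + 51 * x2 * x3 * x3 + 24 * x0 * x1 * x2 - 24 * x0 * x1 * x3 + 18 * x0 * x2 * x3
  + 48 * x1 * x2 * x3
  - 18 * x0 * x0 - 72 * x1 * x1 - 6 * x2 * x2 - 30 * x3 * x3 - 84 * x0 * x1
  - 90 * x0 * x2 - 18 * x0 * x3 - 72 * x1 * x2 - 108 * x1 * x3 - 78 * x2 * x3
  - 40 * x0 - 64 * x1 - 48 * x2 - 40 * x3.

Definition cubic_harm (t : int4) : int := cubic t - 3 * inv_form t.

(* Here [w0] acts as -1; the family [+-1, +-u, +-v, +-uv] was found by computer search. *)
Definition mean_family : seq (seq 'I_4) :=
  let w0 := [:: o3; o1; o2; o0; o1; o3; o0; o1; o2; o0; o1; o0] in
  let u := [:: o3; o1; o2; o0; o1; o0] in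
  let v := [:: o2; o1; o3; o2; o1; o0] in
  [:: [::]; v; u; u ++ v; w0; w0 ++ v; w0 ++ u; w0 ++ u ++ v].

Lemma mean_family_mats : map word_mat mean_family = [::
  ((1, 0, 0, 0), (0, 1, 0, 0), (0, 0, 1, 0), (0, 0, 0, 1));
  ((1, -1, 0, 0), (2, -1, 0, 0), (1, -1, 0, 1), (1, 0, -1, 0));
  ((0, 1, -1, -1), (0, 1, 0, -2), (1, 0, 0, -1), (0, 1, 0, -1));
  ((0, 0, -1, 1), (0, 1, -2, 0), (0, 1, -1, 0), (-1, 1, -1, 0));
  ((-1, 0, 0, 0), (0, -1, 0, 0), (0, 0, -1, 0), (0, 0, 0, -1));
  ((-1, 1, 0, 0), (-2, 1, 0, 0), (-1, 1, 0, -1), (-1, 0, 1, 0));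
  ((0, -1, 1, 1), (0, -1, 0, 2), (-1, 0, 0, 1), (0, -1, 0, 1));
  ((0, 0, 1, -1), (0, -1, 2, 0), (0, -1, 1, 0), (1, -1, 1, 0))].
Proof. by []. Qed.

Lemma mean_value_sel4 i : mean_value (sel4^~ i \o coords) mean_family.
Proof.
apply: mean_value_coords; rewrite mean_family_mats => -[[[a0 a1] a2] a3] [[[b0 b1] b2] b3].
by rewrite !big_cons big_nil /=; move: i; apply: ord4P => /=; ring.
Qed.

Lemma mean_value_quad_harm i j : mean_value (quad_harm i j \o coords) mean_family.
Proof.
apply: mean_value_coords; rewrite mean_family_mats => -[[[a0 a1] a2] a3] [[[b0 b1] b2] b3].
rewrite /quad_harm !big_cons big_nil /=.
by move: i j; apply: ord4P; apply: ord4P; rewrite /cartanD4 !mxE /=; ring.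
Qed.

Lemma mean_value_cubic_harm : mean_value (cubic_harm \o coords) mean_family.
Proof.
apply: mean_value_coords; rewrite mean_family_mats => -[[[a0 a1] a2] a3] [[[b0 b1] b2] b3].
by rewrite /cubic_harm /cubic /inv_form !big_cons big_nil /=; ring.
Qed.

Lemma moment1_IWsc x i : in_IWsc x -> moment1 x i = 0.
Proof.
move=> xI; rewrite -(gr_pair_IWsc (mean_value_sel4 i) isT xI).
by apply: eq_gr_pair => a; exact/esym/sel4_coords.
Qed.

Lemma moment2_IWsc x i j : in_IWsc x ->
  4 * moment2 x i j = cartanD4 i j * gr_pair (inv_form \o coords) x.
Proof.
move=> xI; apply/eqP; rewrite -subr_eq0 -mulNr /moment2 -gr_pair_comb.
rewrite -[X in _ == X](gr_pair_IWsc (mean_value_quad_harm i j) isT xI).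
by apply/eqP/eq_gr_pair => a; rewrite /quad_harm /comp !sel4_coords mulNr.
Qed.

Lemma cubic_IWsc x : in_IWsc x ->
  gr_pair (cubic \o coords) x = 3 * gr_pair (inv_form \o coords) x.
Proof.
move=> xI; apply/eqP; rewrite -subr_eq0 -mulNr -[gr_pair (cubic \o coords) x]mul1r.
rewrite -gr_pair_comb -[X in _ == X](gr_pair_IWsc mean_value_cubic_harm isT xI).
by apply/eqP/eq_gr_pair => a; rewrite /cubic_harm /comp mul1r mulNr.
Qed.

Lemma c2_IWsc_eq x y : in_IWsc x -> in_IWsc y ->
  gr_pair (inv_form \o coords) x = gr_pair (inv_form \o coords) y -> c2 x = c2 y.
Proof.
move=> xI yI eF; apply: c2_eq_of_moments => [i | i j]; first by rewrite !moment1_IWsc.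
by apply: (@mulfI _ 4) => //; rewrite !moment2_IWsc // eF.
Qed.

Definition binz2 (x : int) : int :=
  if 0 <= x then 'C(`|x|, 2)%:Z else 'C(`|x|.+1, 2)%:Z.

Definition binz3 (x : int) : int :=
  if 0 <= x then 'C(`|x|, 3)%:Z else - 'C(`|x|.+2, 3)%:Z.

Lemma binz2E x : 2 * binz2 x = x * (x - 1).
Proof.
have bin2 n : 'C(n.+1, 2)%:Z * 2 = n.+1%:Z * n%:Z.
  by rewrite -!PoszM bin_ffact ffactnS ffactn1.
by rewrite /binz2; case: x => [[|n]|n] //=; rewrite ?NegzE mulrC bin2; ring.
Qed.

Lemma binz3E x : 6 * binz3 x = x * (x - 1) * (x - 2).
Proof.
have bin3 n : 'C(n.+3, 3)%:Z * 6 = n.+3%:Z * n.+2%:Z * n.+1%:Z.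
  by rewrite -!PoszM bin_ffact ffactnS ffactnS ffactn1 mulnA.
by rewrite /binz3; case: x => [[|[|[|n]]]|n] //=; rewrite ?NegzE ?mulrN mulrC bin3; ring.
Qed.

Definition cubic_root (c : int4) : int :=
  let: (c0, c1, c2, c3) := c in
  - binz3 c0 - 2 * binz3 c2 - binz3 c3
  + 2 * binz2 c0 * c1 + 7 * binz2 c0 * c2 - 9 * binz2 c0 * c3
  - c0 * binz2 c1 - 2 * binz2 c1 * c2 + 2 * binz2 c1 * c3
  + c0 * binz2 c2 - 2 * c1 * binz2 c2 + 2 * binz2 c2 * c3 + 2 * c1 * binz2 c3
  - c0 * c3 - c2 * c3.

Lemma cubic_cartan c : cubic (cartan4 c) = 48 * cubic_root c.
Proof.
case: c => [[[c0 c1] c2] c3].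
have -> : 48 * cubic_root (c0, c1, c2, c3) =
    - 8 * (6 * binz3 c0) - 16 * (6 * binz3 c2) - 8 * (6 * binz3 c3)
    + 48 * (2 * binz2 c0) * c1 + 168 * (2 * binz2 c0) * c2 - 216 * (2 * binz2 c0) * c3
    - 24 * c0 * (2 * binz2 c1) - 48 * (2 * binz2 c1) * c2 + 48 * (2 * binz2 c1) * c3
    + 24 * c0 * (2 * binz2 c2) - 48 * c1 * (2 * binz2 c2) + 48 * (2 * binz2 c2) * c3
    + 48 * c1 * (2 * binz2 c3) - 48 * c0 * c3 - 48 * c2 * c3.
  by rewrite /cubic_root; ring.
by rewrite !binz2E !binz3E /cubic /cartan4; ring.
Qed.

Lemma cubic_ZT f : in_ZT f -> (48 %| gr_pair (cubic \o coords) f)%Z.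
Proof.
move=> fZ; rewrite gr_pairE big_seq; apply: rpred_sum => a /fZ [c ->].
by rewrite /comp coords_mulmx_cartan cubic_cartan; apply/dvdz_mull/dvdz_mulr.
Qed.

Lemma inv_form_ZT_IWsc f : in_ZT f -> in_IWsc f ->
  exists M, gr_pair (inv_form \o coords) f = 16 * M.
Proof.
move=> fZ fI; have /dvdzP [M eM] := cubic_ZT fZ.
by exists M; apply: (@mulfI _ 3) => //; rewrite -(cubic_IWsc fI) eM; ring.
Qed.

(** * An invariant element of Z[T^*] *)

Lemma in_ZTD f g : in_ZT f -> in_ZT g -> in_ZT (f + g).
Proof.
by move=> fZ gZ a /(fsubsetP (msuppD_le _ _)); rewrite in_fsetU => /orP[/fZ | /gZ].
Qed.

Lemma in_ZTB f g : in_ZT f -> in_ZT g -> in_ZT (f - g).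
Proof.
by move=> fZ gZ a /(fsubsetP (msuppB_le _ _)); rewrite in_fsetU => /orP[/fZ | /gZ].
Qed.

Lemma in_ZTZ c f : in_ZT f -> in_ZT (c *: f).
Proof. by move=> fZ a /(fsubsetP (msuppZ_le _ _)) /fZ. Qed.

Lemma in_ZTU c a : in_rootlat a -> in_ZT << c *g a >>.
Proof. by move=> aZ b /(fsubsetP msuppU_le); rewrite in_fset1 => /eqP ->. Qed.

Definition root_weight (c : int4) : weight := of_coords c *m cartanD4.

Lemma coords_root_weight c : coords (root_weight c) = cartan4 c.
Proof. by rewrite coords_mulmx_cartan coords_of_coords. Qed.

Lemma sref_root_weight i c : sref i (root_weight c) = of_coords (sref4 i (cartan4 c)).
Proof. by apply: coords_inj; rewrite coords_sref coords_root_weight coords_of_coords. Qed.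

Definition orbit_sum (s : seq int4) : GR := \sum_(c <- s) << root_weight c >>.

Lemma in_ZT_orbit_sum s : in_ZT (orbit_sum s).
Proof.
apply: big_ind => [a|f g|c _]; [by rewrite msupp0 | exact: in_ZTD | ].
by apply: in_ZTU; exists (of_coords c).
Qed.

Lemma W_invariant_orbit_sum s :
  (forall i, perm_eq [seq sref4 i (cartan4 c) | c <- s] [seq cartan4 c | c <- s]) ->
  W_invariant (orbit_sum s).
Proof.
move=> sW; apply: W_invariantP => i; rewrite gr_act_sum.
under eq_bigr do rewrite gr_actU sref_root_weight.
rewrite -(big_map (fun c => sref4 i (cartan4 c)) xpredT (fun t => << of_coords t >>)).
rewrite (perm_big _ (sW i)) big_map; apply: eq_bigr => c _.
by rewrite -[in RHS](of_coordsK (root_weight c)) coords_root_weight.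
Qed.

Lemma gr_pair_orbit_sum (P : int4 -> int) s :
  gr_pair (P \o coords) (orbit_sum s) = \sum_(c <- s) P (cartan4 c).
Proof.
rewrite gr_pair_sum; apply: eq_bigr => c _.
by rewrite gr_pairU mul1r /comp coords_root_weight.
Qed.

Definition opp4 (t : int4) : int4 := let: (x0, x1, x2, x3) := t in (- x0, - x1, - x2, - x3).

Definition pos_roots : seq int4 := [::
  (1, 0, 0, 0); (0, 1, 0, 0); (0, 0, 1, 0); (0, 0, 0, 1); (1, 1, 0, 0); (0, 1, 1, 0);
  (0, 1, 0, 1); (1, 1, 1, 0); (1, 1, 0, 1); (0, 1, 1, 1); (1, 1, 1, 1); (1, 2, 1, 1)].

Definition two_eps : seq int4 := [:: (2, 2, 1, 1); (0, 2, 1, 1); (0, 0, 1, 1); (0, 0, -1, 1)].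

(* In root coordinates, [g0 = sum_(alpha in Phi) e^alpha - sum_i (e^(2 eps_i) + e^(-2 eps_i))]
   where [+- eps_i] are the weights of the vector representation; its [inv_form]-moment is
   [24 * 2 - 8 * 4 = 16]. *)
Definition g0 : GR :=
  orbit_sum (pos_roots ++ map opp4 pos_roots) - orbit_sum (two_eps ++ map opp4 two_eps).

Lemma g0_ZT : in_ZT g0.
Proof. exact/in_ZTB/in_ZT_orbit_sum/in_ZT_orbit_sum. Qed.

Lemma g0_W : W_invariant g0.
Proof. by apply: W_invariantB; apply: W_invariant_orbit_sum; apply: ord4P. Qed.

Lemma g0_inv_form : gr_pair (inv_form \o coords) g0 = 16.
Proof. by rewrite gr_pairB !gr_pair_orbit_sum unlock. Qed.

Definition aug_reduce (f : GR) : GR := f - << aug f *g 0 >>.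

Lemma in_ZT_aug_reduce f : in_ZT f -> in_ZT (aug_reduce f).
Proof. by move=> fZ; apply: in_ZTB fZ _; apply: in_ZTU; exists 0; rewrite mul0mx. Qed.

Lemma gr_pair_aug_reduce P f : P 0 = 0 -> gr_pair P (aug_reduce f) = gr_pair P f.
Proof. by move=> P0; rewrite gr_pairB gr_pairU P0 mulr0 subr0. Qed.

Lemma IWsc_aug_reduce f : W_invariant f -> in_IWsc (aug_reduce f).
Proof.
move=> fW; exists [:: (<< (0 : weight) >>, aug_reduce f)].
split; last by rewrite big_seq1 gr_mul1l.
move=> p; rewrite inE => /eqP -> /=; split.
  by move=> w wW; rewrite raddfB /= gr_actU (inWeyl_fix0 wW) fW.
by rewrite -[aug _]mul1r -gr_pair_cst gr_pairB gr_pairU gr_pair_cst !mul1r mulr1 subrr.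
Qed.

Lemma c2_aug_reduce f : c2 (aug_reduce f) = c2 f.
Proof. by apply: c2_eq_of_moments => *; apply: gr_pair_aug_reduce; rewrite mxE ?mul0r. Qed.

Theorem corollary10p4 : forall q : Sym, Sdec q <-> Dec q.
Proof.
move=> q; split=> [[f [fZ [fI <-]]] | [f [fZ [fW <-]]]]; last first.
  exists (aug_reduce f); rewrite c2_aug_reduce.
  by split; [exact: in_ZT_aug_reduce | split; first exact: IWsc_aug_reduce].
have [M fM] := inv_form_ZT_IWsc fZ fI.
have gW : W_invariant (M *: g0) := W_invariantZ M g0_W.
exists (M *: g0); split; first exact: in_ZTZ g0_ZT.
split; first exact: gW.
rewrite -c2_aug_reduce; apply: c2_IWsc_eq; [exact: IWsc_aug_reduce | exact: fI |].
rewrite gr_pair_aug_reduce; last by rewrite /comp /coords !mxE.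
by rewrite gr_pairZ g0_inv_form fM mulrC.
Qed.
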